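(* Let $\mathcal{H}_O\simeq\mathbb{C}^{d_O}$ and $\mathcal{H}_R\simeq\mathbb{C}^{d_R}$. Let $H_R=\sum_{m=1}^{d_R}\lambda_m^{\uparrow}|\xi_m\rangle\langle\xi_m|$ with $\lambda_1^\uparrow\leqslant\dots\leqslant\lambda_{d_R}^\uparrow$ and $\{|\xi_m\rangle\}$ an orthonormal basis of $\mathcal{H}_R$; let $\beta\in(0,\infty)$ and $\rho_R(\beta)=e^{-\beta H_R}/\mathrm{tr}[e^{-\beta H_R}]=\sum_m r_m^{\downarrow}|\xi_m\rangle\langle\xi_m|$. Let $\rho_O=\sum_{l=1}^{d_O}o_l^{\downarrow}|\varphi_l\rangle\langle\varphi_l|$ be a density operator on $\mathcal{H}_O$ with $o_1^\downarrow\geqslant\dots\geqslant o_{d_O}^\downarrow$ and $\{|\varphi_l\rangle\}$ an orthonormal basis. Write $\rho=\rho_O\otimes\rho_R(\beta)=\sum_{n=1}^{d_Od_R}p_n^{\downarrow}|\psi_n\rangle\langle\psi_n|$, where $(p_n^\downarrow)_n$ is the non-increasing rearrangement of $(o_l^\downarrow r_m^\downarrow)_{l,m}$ and $(|\psi_n\rangle)_n$ the correspondingly rearranged family $(|\varphi_l\rangle\otimes|\xi_m\rangle)_{l,m}$. For a unitary $U$ on $\mathcal{H}_O\otimes\mathcal{H}_R$, let $\rho'=U\rho U^\dagger$, $p(\varphi_1|\rho_O')=\langle\varphi_1|\mathrm{tr}_R[\rho']|\varphi_1\rangle$, and $\Delta Q(U)=\mathrm{tr}[H_R(\mathrm{tr}_O[\rho']-\rho_R(\beta))]$;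 let $p_{\varphi_1}^{\max}=\sum_{m=1}^{d_R}p_m^\downarrow$ (the maximum of $p(\varphi_1|\rho_O')$ over all unitaries). Suppose $U_{\mathrm{opt}}(0)$ is a unitary such that (i) $U_{\mathrm{opt}}(0)|\psi_m\rangle=|\varphi_1\rangle\otimes|\xi_m\rangle$ for all $m\in\{1,\dots,d_R\}$, and (ii) for each $m\in\{1,\dots,d_R\}$ there is an orthonormal family $\{|\varphi_l^m\rangle\}_{l=1}^{d_O-1}$ in $\mathcal{H}_O$, each member orthogonal to $|\varphi_1\rangle$, with $U_{\mathrm{opt}}(0)|\psi_{d_R+(m-1)(d_O-1)+l}\rangle=|\varphi_l^m\rangle\otimes|\xi_m\rangle$ for all $l\in\{1,\dots,d_O-1\}$. Then $U_{\mathrm{opt}}(0)$ attains $p(\varphi_1|\rho_O')=p_{\varphi_1}^{\max}$, and $\Delta Q(U_{\mathrm{opt}}(0))\leqslant\Delta Q(V)$ for every unitary $V$ on $\mathcal{H}_O\otimes\mathcal{H}_R$ that also attains $p(\varphi_1|\mathrm{tr}_R[V\rho V^\dagger])=p_{\varphi_1}^{\max}$.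
   Context: $\mathrm{tr}_O,\mathrm{tr}_R$ denote partial traces over $\mathcal{H}_O$ and $\mathcal{H}_R$. In the paper the rules (i),(ii) are phrased by partitioning $(p_n^\downarrow)$ into the block $\Pi_0=(p_1^\downarrow,\dots,p_{d_R}^\downarrow)$ and blocks $\Pi_m=(p^\downarrow_{d_R+(m-1)(d_O-1)+l})_{l=1}^{d_O-1}$, $m\geqslant1$. *)

From HB Require Import structures.
From mathcomp Require Import all_boot all_order all_algebra.
From mathcomp Require Import complex.
From mathcomp Require Import reals.
From mathcomp.analysis Require Import sequences exp.

Set Implicit Arguments.
Unset Strict Implicit.
Unset Printing Implicit Defensive.

Import Order.TTheory GRing.Theory Num.Theory.
Local Open Scope ring_scope.
Local Open Scope sesquilinear_scope.
Local Open Scope complex_scope.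

(* Conventions: complex scalars are [R[i]] for [R : realType]; kets are column
   vectors ['cV[R[i]]_d]; the composite space H_O (x) H_R of dimension dO*dR is
   indexed by [mxvec_index i j] (i : 'I_dO the H_O index, j : 'I_dR the H_R index). *)

Section QDefs.
Variable R : realType.
Local Notation C := R[i].

Definition tensv (m n : nat) (u : 'cV[C]_m) (v : 'cV[C]_n) : 'cV[C]_(m * n) :=
  (mxvec (u *m v^T))^T.

Definition ketbra (n : nat) (u : 'cV[C]_n) : 'M[C]_n := u *m u ^t*.

Definition expect (n : nat) (u : 'cV[C]_n) (A : 'M[C]_n) : C :=
  (u ^t* *m A *m u) 0 0.

Definition onfam (n k : nat) (u : 'I_k -> 'cV[C]_n) : Prop :=
  forall i j : 'I_k, (u i) ^t* *m (u j) = ((i == j)%:R : C)%:M.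

Definition ptrR (dO dR : nat) (A : 'M[C]_(dO * dR)) : 'M[C]_dO :=
  \matrix_(i, k) \sum_(j < dR) A (mxvec_index i j) (mxvec_index k j).

Definition ptrO (dO dR : nat) (A : 'M[C]_(dO * dR)) : 'M[C]_dR :=
  \matrix_(j, l) \sum_(i < dO) A (mxvec_index i j) (mxvec_index i l).

Arguments ptrR dO dR A : clear implicits.
Arguments ptrO dO dR A : clear implicits.

Definition specop (n k : nat) (a : 'I_k -> R) (u : 'I_k -> 'cV[C]_n) : 'M[C]_n :=
  \sum_(m < k) (a m)%:C *: ketbra (u m).

Definition gibbs_weight (dR : nat) (beta : R) (lam : 'I_dR -> R) (m : 'I_dR) : R :=
  expR (- (beta * lam m)) / \sum_(k < dR) expR (- (beta * lam k)).

Definition pop (dO dR : nat) (phi : 'cV[C]_dO) (rho U : 'M[C]_(dO * dR)) : C :=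
  expect phi (ptrR dO dR (U *m rho *m U ^t*)).

Definition heat (dO dR : nat) (HR rhoR : 'M[C]_dR) (rho U : 'M[C]_(dO * dR)) : C :=
  \tr (HR *m (ptrO dO dR (U *m rho *m U ^t*) - rhoR)).

Definition kron (m n : nat) (A : 'M[C]_m) (B : 'M[C]_n) : 'M[C]_(m * n) :=
  \matrix_(k, k') \sum_(i < m) \sum_(j < n) \sum_(i' < m) \sum_(j' < n)
     (((k == mxvec_index i j) && (k' == mxvec_index i' j'))%:R * (A i i' * B j j')).

Definition rear_ket (dO dR : nat) (phi : 'I_dO -> 'cV[C]_dO) (xi : 'I_dR -> 'cV[C]_dR)
  (sigma : 'I_(dO * dR) -> 'I_dO * 'I_dR) (n : 'I_(dO * dR)) : 'cV[C]_(dO * dR) :=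
  tensv (phi (sigma n).1) (xi (sigma n).2).

Definition rear_weight (dO dR : nat) (o : 'I_dO -> R) (r : 'I_dR -> R)
  (sigma : 'I_(dO * dR) -> 'I_dO * 'I_dR) (n : 'I_(dO * dR)) : R :=
  o (sigma n).1 * r (sigma n).2.

End QDefs.

Arguments pop {R} dO dR phi rho U.
Arguments heat {R} dO dR HR rhoR rho U.

From HB Require Import structures.
From mathcomp Require Import all_boot all_order all_algebra.
From mathcomp Require Import complex.
From mathcomp Require Import reals.
From mathcomp.analysis Require Import sequences exp.
From mathcomp Require Import ring lra zify.

Set Implicit Arguments.
Unset Strict Implicit.
Unset Printing Implicit Defensive.

Import Order.TTheory GRing.Theory Num.Theory.
Local Open Scope complex_scope.
Local Open Scope sesquilinear_scope.
Local Open Scope ring_scope.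

(* For a unitary V the weights a(n; i, m) = |<phi_i (x) xi_m | V psi_n>|^2 form a
   doubly stochastic array (rows n, columns (i, m)), and both the phi_1-population
   and the heat Delta Q(V) are linear in it.  If V attains the maximal population,
   the column of phi_1 absorbs exactly the d_R largest eigenvalues p_n; a bathtub
   argument then shows that every prefix sum over the reservoir levels m < t of the
   final reservoir populations is at most the one produced by U_opt(0), which sends
   the block Pi_m into H_O (x) xi_m.  Since the energies lambda_m increase, Abel
   summation turns this prefix domination into Delta Q(U_opt(0)) <= Delta Q(V). *)

Lemma sum_mul_indicator (R : pzSemiRingType) (I : finType) (P : pred I) (F : I -> R) :
  \sum_(i | P i) F i = \sum_i F i * (P i)%:R.
Proof. by rewrite big_mkcond; apply: eq_bigr => i _; case: (P i); rewrite ?mulr1 ?mulr0. Qed.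

Lemma sum_delta (R : pzSemiRingType) (I : finType) (i : I) (F : I -> R) :
  \sum_j F j * (i == j)%:R = F i.
Proof.
by rewrite -(@sum_mul_indicator _ _ (fun j => i == j)) (big_pred1 i) // => j; rewrite eq_sym.
Qed.

Lemma sum1_ord_lt (R : pzSemiRingType) (N K : nat) :
  (K <= N)%N -> \sum_(n < N | (n < K)%N) (1 : R) = K%:R.
Proof. by move=> KN; rewrite -(big_ord_widen N (fun _ => 1) KN) sumr_const card_ord. Qed.

Lemma sum_sub_le (R : numDomainType) (I : finType) (P : pred I) (F : I -> R) :
  (forall i, 0 <= F i) -> \sum_(i | P i) F i <= \sum_i F i.
Proof. by move=> F_ge0; rewrite [leRHS](bigID P) lerDl sumr_ge0. Qed.

Lemma sum_swap_pairs (V : nmodType) (I J : finType) (F : I -> I -> J -> J -> V) :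
  \sum_i \sum_i' \sum_j \sum_j' F i i' j j' = \sum_j \sum_j' \sum_i \sum_i' F i i' j j'.
Proof.
rewrite pair_bigA [RHS]pair_bigA; under eq_bigr do rewrite pair_bigA.
by rewrite exchange_big; apply: eq_bigr => q _; rewrite pair_bigA.
Qed.

Lemma mxvec_index_eq m n (i i' : 'I_m) (j j' : 'I_n) :
  (mxvec_index i j == mxvec_index i' j') = (i == i') && (j == j').
Proof. by rewrite (inj_eq (@cast_ord_inj _ _ _)) (inj_eq enum_rank_inj). Qed.

Lemma sum_mxvec_index (V : nmodType) m n (F : 'I_(m * n) -> V) :
  \sum_k F k = \sum_i \sum_j F (mxvec_index i j).
Proof. by rewrite pair_big (reindex _ (curry_mxvec_bij m n)); apply: eq_bigr => -[]. Qed.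

Lemma mxtraceB (R : pzRingType) n (A B : 'M[R]_n) : \tr (A - B) = \tr A - \tr B.
Proof. exact: raddfB. Qed.

(** * Bathtub principle and Abel summation *)

Section Bathtub.
Variables (R : realFieldType) (N : nat) (p : 'I_N -> R).
Hypothesis p_noninc : forall n n' : 'I_N, (n <= n')%N -> p n' <= p n.

Lemma bathtub (w : 'I_N -> R) (K : nat) : (K <= N)%N ->
  (forall n, 0 <= w n <= 1) -> \sum_n w n = K%:R ->
  \sum_n p n * w n <= \sum_(n < N | (n < K)%N) p n.
Proof.
move=> KN w01 wK.
(* A threshold s between the K largest values of p and the others makes every term
   of the sum (p n - s) (w n - [n < K]) nonpositive. *)
have [s p_ge p_le] : exists2 s, (forall n : 'I_N, (n < K)%N -> s <= p n)
    & (forall n : 'I_N, (K <= n)%N -> p n <= s).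
  case: (posnP N) => [N0 | N_gt0].
    by exists 0 => n; exfalso; move: (ltn_ord n); lia.
  have KN' : (K.-1 < N)%N by lia.
  by exists (p (Ordinal KN')) => n hn; apply: p_noninc => /=; lia.
pose chi (n : 'I_N) : R := (n < K)%N%:R.
have : \sum_n (p n - s) * (w n - chi n) <= 0.
  apply: sumr_le0 => n _; have /andP[w0 w1] := w01 n; rewrite /chi.
  case: ltnP => hn.
    by apply: mulr_ge0_le0; rewrite ?subr_ge0 ?subr_le0 ?p_ge.
  by apply: mulr_le0_ge0; rewrite ?subr_le0 ?subr0 ?p_le.
have sum_chi : \sum_n chi n = K%:R.
  by rewrite -(sum1_ord_lt R KN) [RHS]sum_mul_indicator; apply: eq_bigr => n _; rewrite mul1r.
have sum_pchi : \sum_n p n * chi n = \sum_(n < N | (n < K)%N) p n.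
  by rewrite [RHS]sum_mul_indicator.
suff -> : \sum_n (p n - s) * (w n - chi n)
    = \sum_n p n * w n - \sum_(n < N | (n < K)%N) p n - s * (\sum_n w n - \sum_n chi n).
  by rewrite wK sum_chi subrr mulr0 subr0 subr_le0.
rewrite -sum_pchi mulrBr !mulr_sumr -!sumrB; apply: eq_bigr => n _; ring.
Qed.

End Bathtub.

Section Abel.
Variable R : realDomainType.

Lemma abel_nat (L Z : nat -> R) n :
  (forall j, (j.+1 < n)%N -> L j <= L j.+1) ->
  (forall t, (t <= n)%N -> \sum_(j < t) Z j <= 0) ->
  L n.-1 * \sum_(j < n) Z j <= \sum_(j < n) L j * Z j.
Proof.
elim: n => [|[|n] IH] L_nondecr Z_prefix; first by rewrite !big_ord0 mulr0.
  by rewrite !big_ord1.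
rewrite big_ord_recr [X in _ <= X]big_ord_recr /=.
have IH' := IH (fun j hj => L_nondecr j (ltnW hj)) (fun t ht => Z_prefix t (leqW ht)).
have : (L n.+1 - L n) * \sum_(j < n.+1) Z j <= 0.
  by apply: mulr_ge0_le0; rewrite ?subr_ge0 ?L_nondecr ?Z_prefix.
rewrite /= in IH'; nra.
Qed.

Lemma prefix_dominance_wsum d (lam y y0 : 'I_d -> R) :
  (forall m m' : 'I_d, (m <= m')%N -> lam m <= lam m') ->
  (forall t, (t <= d)%N -> \sum_(m < d | (m < t)%N) y m <= \sum_(m < d | (m < t)%N) y0 m) ->
  \sum_m y m = \sum_m y0 m ->
  \sum_m lam m * y0 m <= \sum_m lam m * y m.
Proof.
case: d lam y y0 => [|d] lam y y0 lam_nondecr prefix total; first by rewrite !big_ord0.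
pose L j := lam (inord j); pose Z j := y (inord j) - y0 (inord j).
have sumZ t : (t <= d.+1)%N ->
    \sum_(j < t) Z j = \sum_(m < d.+1 | (m < t)%N) y m - \sum_(m < d.+1 | (m < t)%N) y0 m.
  move=> td; rewrite (big_ord_widen d.+1 Z td) -sumrB.
  by apply: eq_bigr => m _; rewrite /Z inord_val.
have sumLZ : \sum_(j < d.+1) L j * Z j = \sum_m lam m * y m - \sum_m lam m * y0 m.
  by rewrite -sumrB; apply: eq_bigr => m _; rewrite /L /Z inord_val mulrBr.
rewrite -subr_ge0 -sumLZ.
have total0 : \sum_(j < d.+1) Z j = 0.
  by rewrite /Z; under eq_bigr do rewrite !inord_val; rewrite sumrB total subrr.
have := @abel_nat L Z d.+1; rewrite total0 mulr0; apply.
  by move=> j jd; apply: lam_nondecr; rewrite !inordK //; lia.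
by move=> t td; rewrite sumZ // subr_le0 prefix.
Qed.

End Abel.

(** * Doubly stochastic transitions *)

Section DoublyStochastic.
Variables (R : realFieldType) (dO dR : nat) (i0 : 'I_dO).
Local Notation N := (dO * dR)%N.
Variables (p : 'I_N -> R) (a : 'I_N -> 'I_dO -> 'I_dR -> R).
Hypothesis p_noninc : forall n n' : 'I_N, (n <= n')%N -> p n' <= p n.
Hypothesis a_ge0 : forall n i m, 0 <= a n i m.
Hypothesis a_row : forall n, \sum_i \sum_m a n i m = 1.
Hypothesis a_col : forall i m, \sum_n a n i m = 1.
Hypothesis a_opt : \sum_m \sum_n p n * a n i0 m = \sum_(n < N | (n < dR)%N) p n.

Local Notation psum K := (\sum_(n < N | (n < K)%N) p n).

Lemma psumE K : psum K = \sum_n p n * (n < K)%N%:R.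
Proof. exact: sum_mul_indicator. Qed.

Lemma occupation_prefix_le t : (t <= dR)%N ->
  \sum_(m < dR | (m < t)%N) \sum_i \sum_n p n * a n i m
    <= psum t + (psum (dR + t * dO.-1) - psum dR).
Proof.
move=> tdR.
(* Split off the column i0: f has mass t, and g completes c, whose weight psum dR
   is fixed by a_opt, to a vector of mass dR + t (dO - 1); bathtub bounds both. *)
have dO_gt0 : (0 < dO)%N by case: dO i0 => [[]|].
pose c n := \sum_m a n i0 m.
pose f n := \sum_(m < dR | (m < t)%N) a n i0 m.
pose g n := \sum_(m < dR | (m < t)%N) \sum_(i | i != i0) a n i m.
have c_g_le1 n : c n + g n <= 1.
  rewrite -(a_row n) (bigD1 i0) //= lerD2l exchange_big /=.
  by apply: sum_sub_le => m; apply: sumr_ge0.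
have g_ge0 n : 0 <= g n by apply: sumr_ge0 => m _; apply: sumr_ge0.
have sum_f : \sum_n f n = t%:R.
  by rewrite exchange_big /= -(sum1_ord_lt R tdR); apply: eq_bigr => m _; rewrite a_col.
have sum_c : \sum_n c n = dR%:R.
  by rewrite exchange_big /= -[dR in RHS]card_ord -sumr_const; apply: eq_bigr => m _; rewrite a_col.
have sum_g : \sum_n g n = (t * dO.-1)%:R.
  rewrite exchange_big /= natrM -(sum1_ord_lt R tdR) mulr_suml; apply: eq_bigr => m _.
  rewrite exchange_big /= mul1r -[dO in RHS]card_ord -(cardC1 i0) -sumr_const.
  by apply: eq_big => [i | i _]; rewrite ?inE ?a_col.
have c_opt : \sum_n p n * c n = psum dR.
  by rewrite -a_opt exchange_big; apply: eq_bigr => n _; rewrite mulr_sumr.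
have -> : \sum_(m < dR | (m < t)%N) \sum_i \sum_n p n * a n i m
    = \sum_n p n * f n + \sum_n p n * g n.
  rewrite -big_split /=; under eq_bigr do rewrite exchange_big /=.
  rewrite exchange_big; apply: eq_bigr => n _ /=.
  rewrite -mulrDr -big_split /= mulr_sumr; apply: eq_bigr => m _.
  by rewrite (bigD1 i0) //= mulrDr mulr_sumr.
apply: lerD.
  apply: bathtub => //; first by apply: leq_trans (leq_pmull _ dO_gt0).
  move=> n; rewrite sumr_ge0 //=; apply: le_trans (c_g_le1 n); rewrite -[f n]addr0.
  by apply: lerD => //; apply: sum_sub_le.
rewrite lerBrDl -c_opt -big_split /=; under eq_bigr do rewrite -mulrDr.
apply: bathtub => //; first by case: dO dO_gt0 => //= d _; nia.
  by move=> n; rewrite c_g_le1 andbT addr_ge0 // sumr_ge0.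
by rewrite big_split /= sum_c sum_g natrD.
Qed.

Lemma occupation_total : \sum_m \sum_i \sum_n p n * a n i m = \sum_n p n.
Proof.
under eq_bigr do rewrite exchange_big /=.
rewrite exchange_big; apply: eq_bigr => n _ /=.
rewrite exchange_big /= -[RHS]mulr1 -(a_row n) mulr_sumr.
by apply: eq_bigr => i _; rewrite mulr_sumr.
Qed.

Section Levels.
Variable level : 'I_N -> 'I_dR.
Hypothesis level_ltE : forall (n : 'I_N) t, (t <= dR)%N ->
  (level n < t)%N = (n < t)%N || (dR <= n < dR + t * dO.-1)%N.

Lemma level_occupation_prefix t : (t <= dR)%N ->
  \sum_(m < dR | (m < t)%N) \sum_n p n * (level n == m)%:R
    = psum t + (psum (dR + t * dO.-1) - psum dR).
Proof.
move=> tdR.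
have -> : \sum_(m < dR | (m < t)%N) \sum_n p n * (level n == m)%:R
    = \sum_n p n * (level n < t)%N%:R.
  rewrite exchange_big; apply: eq_bigr => n _ /=; rewrite -mulr_sumr sum_mul_indicator.
  by under eq_bigr do rewrite mulrC; rewrite sum_delta.
have indicators n : ((level n < t) + (n < dR) = (n < t) + (n < dR + t * dO.-1))%N.
  by rewrite level_ltE //; lia.
apply: (addIr (psum dR)); rewrite addrA subrK !psumE -!big_split /=.
by apply: eq_bigr => n _; rewrite -!mulrDr -!natrD indicators.
Qed.

Lemma level_occupation_wsum_le (lam : 'I_dR -> R) :
  (forall m m' : 'I_dR, (m <= m')%N -> lam m <= lam m') ->
  \sum_m lam m * \sum_n p n * (level n == m)%:R
    <= \sum_m lam m * \sum_i \sum_n p n * a n i m.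
Proof.
move=> lam_nondecr; apply: prefix_dominance_wsum => // [t tdR | ].
  by rewrite level_occupation_prefix //; apply: occupation_prefix_le.
rewrite occupation_total exchange_big; apply: eq_bigr => n _.
by rewrite (sum_delta (level n) (fun=> p n)).
Qed.

End Levels.

End DoublyStochastic.

(** * Block structure of the optimal unitary *)

(* The reservoir level to which U_opt(0) sends psi_n, with 0-based indices: n itself
   on the head block Pi_0 = [0, d_R), and m on the block Pi_(m+1) of width d_O - 1. *)
Definition block_level (dO dR n : nat) : nat :=
  if (n < dR)%N then n else ((n - dR) %/ dO.-1)%N.

Section BlockLevel.
Variables (dO dR n : nat).
Hypothesis n_lt : (n < dO * dR)%N.

Lemma block_width_gt0 : (dR <= n)%N -> (0 < dO.-1)%N.
Proof. by move=> dRn; case: dO n_lt => [|[|d]] //=; lia. Qed.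

Lemma block_level_lt : (block_level dO dR n < dR)%N.
Proof.
rewrite /block_level; case: (ltnP n dR) => // dRn.
have w_gt0 := block_width_gt0 dRn; rewrite ltn_divLR //.
by case: dO n_lt w_gt0 => [|d] //=; nia.
Qed.

Lemma block_level_ltE t : (t <= dR)%N ->
  (block_level dO dR n < t)%N = (n < t)%N || (dR <= n < dR + t * dO.-1)%N.
Proof.
rewrite /block_level => tdR; case: (ltnP n dR) => [ndR | dRn]; first by rewrite orbF.
by rewrite ltn_divLR ?block_width_gt0 //; apply/idP/idP; lia.
Qed.

Lemma block_level_offset : (dR <= n)%N ->
  n = (dR + block_level dO dR n * dO.-1 + (n - dR) %% dO.-1)%N.
Proof. by rewrite /block_level => dRn; rewrite ltnNge dRn /= -addnA -divn_eq; lia. Qed.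

End BlockLevel.

Definition block_level_ord dO dR (n : 'I_(dO * dR)) : 'I_dR := Ordinal (block_level_lt (ltn_ord n)).

(** * Finite-dimensional quantum states *)

Section Quantum.
Variable R : realType.
Local Notation C := R[i].

Definition sqnorm (z : C) : R := complex.Re z ^+ 2 + complex.Im z ^+ 2.

Lemma sqnormE z : (sqnorm z)%:C = z * z^*.
Proof. by rewrite add_Re2_Im2 normCK. Qed.

Lemma sqnorm_ge0 z : 0 <= sqnorm z.
Proof. by rewrite addr_ge0 ?sqr_ge0. Qed.

Lemma sqnormM x y : sqnorm (x * y) = sqnorm x * sqnorm y.
Proof. by apply: (@complexI R); rewrite rmorphM /= !sqnormE rmorphM /=; ring. Qed.

Lemma sqnormJ z : sqnorm z^* = sqnorm z.
Proof. by apply: (@complexI R); rewrite !sqnormE conjCK mulrC. Qed.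

Lemma sqnorm_nat (b : bool) : sqnorm b%:R = b%:R.
Proof. by case: b; rewrite /sqnorm /= ?expr1n expr0n ?addr0. Qed.

Definition braket n (u v : 'cV[C]_n) : C := (u ^t* *m v) 0 0.

Lemma braketE n (u v : 'cV[C]_n) : braket u v = \sum_k (u k 0)^* * v k 0.
Proof. by rewrite /braket mxE; apply: eq_bigr => k _; rewrite !mxE. Qed.

Lemma braketC n (u v : 'cV[C]_n) : braket u v = (braket v u)^*.
Proof.
rewrite !braketE rmorph_sum; apply: eq_bigr => k _.
by rewrite rmorphM /= conjCK mulrC.
Qed.

Lemma onfam_braket n k (u : 'I_k -> 'cV[C]_n) : onfam u ->
  forall i j, braket (u i) (u j) = (i == j)%:R.
Proof. by move=> u_on i j; rewrite /braket u_on mxE eqxx mulr1n. Qed.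

Lemma braket_adj n (V : 'M[C]_n) (u v : 'cV[C]_n) : braket u (V *m v) = braket (V ^t* *m u) v.
Proof. by rewrite /braket trmx_mul map_mxM trmxCK mulmxA. Qed.

Lemma braket_unitary n (V : 'M[C]_n) (u v : 'cV[C]_n) :
  V \is unitarymx -> braket (V *m u) (V *m v) = braket u v.
Proof.
move=> /unitarymxP/mulmx1C V_unitary.
by rewrite braket_adj mulmxA V_unitary mul1mx.
Qed.

Lemma tensvE m n (u : 'cV[C]_m) (v : 'cV[C]_n) i j :
  tensv u v (mxvec_index i j) 0 = u i 0 * v j 0.
Proof. by rewrite /tensv mxE mxvecE mxE big_ord1 !mxE. Qed.

Lemma braket_tensv m n (a u : 'cV[C]_m) (b v : 'cV[C]_n) :
  braket (tensv a b) (tensv u v) = braket a u * braket b v.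
Proof.
rewrite !braketE sum_mxvec_index mulr_suml; apply: eq_bigr => i _.
rewrite mulr_sumr; apply: eq_bigr => j _.
by rewrite !tensvE rmorphM /=; ring.
Qed.

Lemma ketbraE n (u : 'cV[C]_n) k l : ketbra u k l = u k 0 * (u l 0)^*.
Proof. by rewrite /ketbra mxE big_ord1 !mxE. Qed.

Lemma expectE n (u : 'cV[C]_n) (A : 'M[C]_n) :
  expect u A = \sum_k \sum_l (u k 0)^* * A k l * u l 0.
Proof.
rewrite /expect mxE exchange_big; apply: eq_bigr => k _.
by rewrite mxE mulr_suml; apply: eq_bigr => l _; rewrite !mxE.
Qed.

Lemma expect1 n (u : 'cV[C]_n) : expect u 1%:M = braket u u.
Proof. by rewrite /expect mulmx1. Qed.

Lemma expect_sum n (T : finType) (u : 'cV[C]_n) (A : T -> 'M[C]_n) :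
  expect u (\sum_t A t) = \sum_t expect u (A t).
Proof. by rewrite /expect mulmx_sumr mulmx_suml summxE. Qed.

Lemma expectZ n (u : 'cV[C]_n) c (A : 'M[C]_n) : expect u (c *: A) = c * expect u A.
Proof. by rewrite /expect -scalemxAr -scalemxAl mxE. Qed.

Lemma expect_ketbra n (u v : 'cV[C]_n) : expect u (ketbra v) = (sqnorm (braket u v))%:C.
Proof.
rewrite sqnormE -braketC /expect /ketbra !mulmxA.
by rewrite -mulmxA mxE big_ord1.
Qed.

Lemma expect_specop n k (u : 'cV[C]_n) (a : 'I_k -> R) (v : 'I_k -> 'cV[C]_n) :
  expect u (specop a v) = (\sum_m a m * sqnorm (braket u (v m)))%:C.
Proof.
rewrite expect_sum rmorph_sum; apply: eq_bigr => m _.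
by rewrite expectZ expect_ketbra rmorphM.
Qed.

Lemma specop_conj n k (V : 'M[C]_n) (a : 'I_k -> R) (v : 'I_k -> 'cV[C]_n) :
  V *m specop a v *m V ^t* = specop a (fun m => V *m v m).
Proof.
rewrite mulmx_sumr mulmx_suml; apply: eq_bigr => m _.
by rewrite -scalemxAr -scalemxAl /ketbra trmx_mul map_mxM !mulmxA.
Qed.

Lemma tr_specop n k (a : 'I_k -> R) (v : 'I_k -> 'cV[C]_n) (Y : 'M[C]_n) :
  \tr (specop a v *m Y) = \sum_m (a m)%:C * expect (v m) Y.
Proof.
rewrite mulmx_suml raddf_sum; apply: eq_bigr => m _.
by rewrite -scalemxAl /= mxtraceZ /ketbra -mulmxA mxtrace_mulC /expect /mxtrace big_ord1.
Qed.

Lemma onfam_resolution n (u : 'I_n -> 'cV[C]_n) : onfam u -> \sum_i ketbra (u i) = 1%:M.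
Proof.
move=> u_on; pose M : 'M[C]_n := \matrix_(k, i) u i k 0.
have /mulmx1C MM : M ^t* *m M = 1%:M.
  apply/matrixP => i j; rewrite mxE [RHS]mxE -(onfam_braket u_on) braketE.
  by apply: eq_bigr => k _; rewrite !mxE.
rewrite -MM; apply/matrixP => k l; rewrite summxE mxE.
by apply: eq_bigr => i _; rewrite ketbraE !mxE.
Qed.

Lemma parseval n (T : finType) (f : T -> 'cV[C]_n) : \sum_t ketbra (f t) = 1%:M ->
  forall w, (\sum_t sqnorm (braket (f t) w))%:C = braket w w.
Proof.
move=> f_res w; rewrite -expect1 -f_res expect_sum rmorph_sum.
by apply: eq_bigr => t _; rewrite expect_ketbra braketC sqnormJ.
Qed.

Lemma resolution_entry n (T : finType) (f : T -> 'cV[C]_n) : \sum_t ketbra (f t) = 1%:M ->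
  forall j j', \sum_t (f t j 0)^* * f t j' 0 = (j == j')%:R.
Proof.
move=> f_res j j'; move/matrixP/(_ j' j): f_res; rewrite summxE mxE eq_sym => <-.
by apply: eq_bigr => t _; rewrite ketbraE mulrC.
Qed.

Lemma kronE m n (A : 'M[C]_m) (B : 'M[C]_n) i j i' j' :
  kron A B (mxvec_index i j) (mxvec_index i' j') = A i i' * B j j'.
Proof.
rewrite mxE; transitivity (\sum_a (\sum_b (\sum_a' (\sum_b'
    A a a' * B b b' * (j' == b')%:R) * (i' == a')%:R) * (j == b)%:R) * (i == a)%:R);
  last by rewrite !sum_delta.
apply: eq_bigr => a _; rewrite mulr_suml; apply: eq_bigr => b _.
rewrite !mulr_suml; apply: eq_bigr => a' _; rewrite !mulr_suml; apply: eq_bigr => b' _.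
by rewrite !mxvec_index_eq -!mulnb !natrM; ring.
Qed.

Lemma kron1 m n : kron (1%:M : 'M[C]_m) (1%:M : 'M[C]_n) = 1%:M.
Proof.
apply/matrixP => k k'; case/mxvec_indexP: k => i j; case/mxvec_indexP: k' => i' j'.
by rewrite kronE !mxE mxvec_index_eq -natrM mulnb.
Qed.

Lemma specopE n k (a : 'I_k -> R) (v : 'I_k -> 'cV[C]_n) i i' :
  specop a v i i' = \sum_m (a m)%:C * (v m i 0 * (v m i' 0)^*).
Proof. by rewrite summxE; apply: eq_bigr => m _; rewrite mxE ketbraE. Qed.

Lemma kron_specop m n k l (a : 'I_k -> R) (u : 'I_k -> 'cV[C]_m)
    (b : 'I_l -> R) (v : 'I_l -> 'cV[C]_n) :
  kron (specop a u) (specop b v)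
    = \sum_s \sum_t (a s * b t)%:C *: ketbra (tensv (u s) (v t)).
Proof.
apply/matrixP => k1 k2; case/mxvec_indexP: k1 => i j; case/mxvec_indexP: k2 => i' j'.
rewrite kronE !specopE summxE mulr_suml; apply: eq_bigr => s _.
rewrite summxE mulr_sumr; apply: eq_bigr => t _.
by rewrite mxE ketbraE !tensvE !rmorphM /=; ring.
Qed.

Lemma tensv_resolution m n (u : 'I_m -> 'cV[C]_m) (v : 'I_n -> 'cV[C]_n) :
  onfam u -> onfam v -> \sum_s \sum_t ketbra (tensv (u s) (v t)) = 1%:M.
Proof.
move=> u_on v_on.
have specop1 k (w : 'I_k -> 'cV[C]_k) : specop (fun=> 1) w = \sum_s ketbra (w s).
  by apply: eq_bigr => s _; rewrite rmorph1 scale1r.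
rewrite -kron1 -(onfam_resolution u_on) -(onfam_resolution v_on) -!specop1 kron_specop.
by apply: eq_bigr => s _; apply: eq_bigr => t _; rewrite mulr1 rmorph1 scale1r.
Qed.

Section Rearrangement.
Variables (m n : nat) (sigma : 'I_(m * n) -> 'I_m * 'I_n).
Hypothesis sigma_bij : bijective sigma.

Lemma rear_ket_resolution (u : 'I_m -> 'cV[C]_m) (v : 'I_n -> 'cV[C]_n) :
  onfam u -> onfam v -> \sum_k ketbra (rear_ket u v sigma k) = 1%:M.
Proof.
move=> u_on v_on; rewrite -(tensv_resolution u_on v_on) pair_bigA.
by rewrite (reindex sigma) //; apply: onW_bij.
Qed.

Lemma kron_specop_rear (a : 'I_m -> R) (u : 'I_m -> 'cV[C]_m)
    (b : 'I_n -> R) (v : 'I_n -> 'cV[C]_n) :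
  kron (specop a u) (specop b v) = specop (rear_weight a b sigma) (rear_ket u v sigma).
Proof. by rewrite kron_specop pair_bigA (reindex sigma) //; apply: onW_bij. Qed.

End Rearrangement.

Lemma expect_tensv m n (e : 'cV[C]_m) (v : 'cV[C]_n) (X : 'M[C]_(m * n)) :
  expect (tensv e v) X = \sum_i \sum_i' \sum_j \sum_j'
    (e i 0)^* * e i' 0 * ((v j 0)^* * v j' 0) * X (mxvec_index i j) (mxvec_index i' j').
Proof.
rewrite expectE sum_mxvec_index; apply: eq_bigr => i _.
under eq_bigr do rewrite sum_mxvec_index.
rewrite exchange_big; apply: eq_bigr => i' _; apply: eq_bigr => j _; apply: eq_bigr => j' _.
by rewrite !tensvE rmorphM /=; ring.
Qed.

Lemma expect_ptrR dO dR (T : finType) (f : T -> 'cV[C]_dR) : \sum_t ketbra (f t) = 1%:M ->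
  forall (e : 'cV[C]_dO) (X : 'M[C]_(dO * dR)),
  expect e (ptrR X) = \sum_t expect (tensv e (f t)) X.
Proof.
move=> f_res e X; under [RHS]eq_bigr do rewrite expect_tensv.
rewrite expectE [RHS]exchange_big; apply: eq_bigr => i _.
rewrite [RHS]exchange_big; apply: eq_bigr => i' _.
rewrite mxE mulr_sumr mulr_suml [RHS]exchange_big; apply: eq_bigr => j _ /=.
rewrite [RHS]exchange_big; transitivity (\sum_j'
    (e i 0)^* * e i' 0 * X (mxvec_index i j) (mxvec_index i' j') * (j == j')%:R).
  by rewrite sum_delta; ring.
apply: eq_bigr => j' _; rewrite -(resolution_entry f_res) !mulr_sumr.
by apply: eq_bigr => t _; ring.
Qed.

Lemma expect_ptrO dO dR (T : finType) (f : T -> 'cV[C]_dO) : \sum_t ketbra (f t) = 1%:M ->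
  forall (v : 'cV[C]_dR) (X : 'M[C]_(dO * dR)),
  expect v (ptrO X) = \sum_t expect (tensv (f t) v) X.
Proof.
move=> f_res v X; under [RHS]eq_bigr do rewrite expect_tensv sum_swap_pairs.
rewrite expectE [RHS]exchange_big; apply: eq_bigr => j _.
rewrite [RHS]exchange_big; apply: eq_bigr => j' _.
rewrite mxE mulr_sumr mulr_suml [RHS]exchange_big; apply: eq_bigr => i _ /=.
rewrite [RHS]exchange_big; transitivity (\sum_i'
    (v j 0)^* * v j' 0 * X (mxvec_index i j) (mxvec_index i' j') * (i == i')%:R).
  by rewrite sum_delta; ring.
apply: eq_bigr => i' _; rewrite -(resolution_entry f_res) !mulr_sumr.
by apply: eq_bigr => t _; ring.
Qed.

End Quantum.

Section TransitionWeights.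
Variables (R : realType) (dO dR : nat).
Local Notation C := R[i].
Local Notation N := (dO * dR)%N.
Variables (phi : 'I_dO -> 'cV[C]_dO) (xi : 'I_dR -> 'cV[C]_dR) (psi : 'I_N -> 'cV[C]_N).
Hypotheses (phi_on : onfam phi) (xi_on : onfam xi).
Hypothesis psi_res : \sum_n ketbra (psi n) = 1%:M.
Hypothesis psi_unit : forall n, braket (psi n) (psi n) = 1.

Definition trans_weight (V : 'M[C]_N) n i m :=
  sqnorm (braket (tensv (phi i) (xi m)) (V *m psi n)).

Lemma pop_specop (i0 : 'I_dO) (p : 'I_N -> R) V :
  pop dO dR (phi i0) (specop p psi) V = (\sum_m \sum_n p n * trans_weight V n i0 m)%:C.
Proof.
rewrite /pop (expect_ptrR (onfam_resolution xi_on)) specop_conj rmorph_sum.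
by apply: eq_bigr => m _; rewrite expect_specop.
Qed.

Lemma heat_specop (lam : 'I_dR -> R) (rhoR : 'M[C]_dR) (p : 'I_N -> R) V :
  heat dO dR (specop lam xi) rhoR (specop p psi) V
    = (\sum_m lam m * \sum_i \sum_n p n * trans_weight V n i m)%:C
      - \tr (specop lam xi *m rhoR).
Proof.
rewrite /heat mulmxBr mxtraceB; congr (_ - _); rewrite tr_specop rmorph_sum.
apply: eq_bigr => m _; rewrite rmorphM (expect_ptrO (onfam_resolution phi_on)).
by rewrite specop_conj rmorph_sum; congr (_ * _); apply: eq_bigr => i _; rewrite expect_specop.
Qed.

Lemma trans_weight_ge0 V n i m : 0 <= trans_weight V n i m.
Proof. exact: sqnorm_ge0. Qed.

Lemma trans_weight_row V : V \is unitarymx -> forall n, \sum_i \sum_m trans_weight V n i m = 1.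
Proof.
move=> V_unitary n; apply: (@complexI R).
rewrite rmorph1 -(psi_unit n) -(braket_unitary _ _ V_unitary) pair_bigA.
by apply: parseval; rewrite -(tensv_resolution phi_on xi_on) pair_bigA.
Qed.

Lemma trans_weight_col V : V \is unitarymx -> forall i m, \sum_n trans_weight V n i m = 1.
Proof.
move=> V_unitary i m; apply: (@complexI R).
transitivity (\sum_n sqnorm (braket (psi n) (V ^t* *m tensv (phi i) (xi m))))%:C.
  by congr (_%:C); apply: eq_bigr => n _; rewrite /trans_weight braket_adj braketC sqnormJ.
rewrite parseval // braket_unitary ?trmxC_unitary // braket_tensv.
by rewrite !(onfam_braket phi_on, onfam_braket xi_on) !eqxx mulr1 rmorph1.
Qed.

Section ProductImage.
Variables (V : 'M[C]_N) (n : 'I_N) (u : 'cV[C]_dO) (m' : 'I_dR).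
Hypothesis V_psi : V *m psi n = tensv u (xi m').

Lemma trans_weight_tensv i m :
  trans_weight V n i m = sqnorm (braket (phi i) u) * (m' == m)%:R.
Proof.
by rewrite /trans_weight V_psi braket_tensv sqnormM (onfam_braket xi_on) sqnorm_nat eq_sym.
Qed.

Lemma trans_weight_tensv_sum m : braket u u = 1 -> \sum_i trans_weight V n i m = (m' == m)%:R.
Proof.
move=> u_unit; under eq_bigr do rewrite trans_weight_tensv.
rewrite -mulr_suml -[RHS]mul1r; congr (_ * _); apply: (@complexI R).
by rewrite rmorph1 -u_unit; apply: parseval; apply: onfam_resolution.
Qed.

End ProductImage.

End TransitionWeights.

Section OptimalUnitary.
Variables (R : realType) (dO dR : nat).
Local Notation C := R[i].
Local Notation N := (dO * dR)%N.
Variables (phi : 'I_dO -> 'cV[C]_dO) (xi : 'I_dR -> 'cV[C]_dR) (i0 : 'I_dO).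
Variables (psi : 'I_N -> 'cV[C]_N) (U : 'M[C]_N).
Hypotheses (phi_on : onfam phi) (xi_on : onfam xi).
Hypothesis U_head : forall (n : 'I_N) (m : 'I_dR), val n = val m ->
  U *m psi n = tensv (phi i0) (xi m).
Hypothesis U_blocks : forall m : 'I_dR, exists phim : 'I_dO.-1 -> 'cV[C]_dO,
  [/\ onfam phim, (forall l, (phi i0) ^t* *m phim l = 0) &
      (forall (n : 'I_N) (l : 'I_dO.-1), val n = (dR + m * dO.-1 + l)%N ->
         U *m psi n = tensv (phim l) (xi m))].

Lemma optimal_unitary_image n : exists2 u : 'cV[C]_dO,
  U *m psi n = tensv u (xi (block_level_ord n))
  & braket u u = 1 /\ braket (phi i0) u = (n < dR)%N%:R.
Proof.
have phi0_unit : braket (phi i0) (phi i0) = 1 by rewrite (onfam_braket phi_on) eqxx.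
case: (ltnP n dR) => [ndR | dRn].
  by exists (phi i0); [apply: U_head; rewrite /= /block_level ndR | rewrite phi0_unit].
have [phim [phim_on phim_orth U_phim]] := U_blocks (block_level_ord n).
pose l := Ordinal (ltn_pmod (n - dR) (block_width_gt0 (ltn_ord n) dRn)).
exists (phim l); first by apply: U_phim; exact: block_level_offset (ltn_ord n) dRn.
by rewrite (onfam_braket phim_on) eqxx /braket phim_orth mxE.
Qed.

Lemma trans_weight_optimal n m :
  \sum_i trans_weight phi xi psi U n i m = (block_level_ord n == m)%:R
  /\ trans_weight phi xi psi U n i0 m = (n < dR)%N%:R * (block_level_ord n == m)%:R.
Proof.
have [u U_psi [u_unit phi0_u]] := optimal_unitary_image n.
split; first by rewrite (trans_weight_tensv_sum phi_on xi_on U_psi m u_unit).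
by rewrite (trans_weight_tensv phi xi_on U_psi) phi0_u sqnorm_nat.
Qed.

Lemma pop_optimal (p : 'I_N -> R) :
  pop dO dR (phi i0) (specop p psi) U = (\sum_(n < N | (n < dR)%N) p n)%:C.
Proof.
rewrite (pop_specop phi psi xi_on); congr (_%:C).
rewrite exchange_big [RHS]sum_mul_indicator; apply: eq_bigr => n _; rewrite -mulr_sumr.
by under eq_bigr do rewrite (proj2 (trans_weight_optimal n _)); rewrite sum_delta.
Qed.

Lemma heat_optimal (lam : 'I_dR -> R) (rhoR : 'M[C]_dR) (p : 'I_N -> R) :
  heat dO dR (specop lam xi) rhoR (specop p psi) U
    = (\sum_m lam m * \sum_n p n * (block_level_ord n == m)%:R)%:C
      - \tr (specop lam xi *m rhoR).
Proof.
rewrite (heat_specop xi psi phi_on); congr ((_)%:C - _); apply: eq_bigr => m _.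
congr (_ * _); rewrite exchange_big; apply: eq_bigr => n _.
by rewrite -mulr_sumr (proj1 (trans_weight_optimal n m)).
Qed.

End OptimalUnitary.

Theorem theorem2 (R : realType) (dO dR : nat) (hO : (0 < dO)%N)
  (* H_R = sum_m lam_m |xi_m><xi_m|, lam nondecreasing, xi orthonormal basis *)
  (lam : 'I_dR -> R) (xi : 'I_dR -> 'cV[R[i]]_dR)
  (hlam : forall m m' : 'I_dR, (m <= m')%N -> lam m <= lam m')
  (hxi : onfam xi)
  (beta : R) (hbeta : 0 < beta)
  (* rho_O = sum_l o_l |phi_l><phi_l|, a density operator, o nonincreasing *)
  (o : 'I_dO -> R) (phi : 'I_dO -> 'cV[R[i]]_dO)
  (ho_ge0 : forall l, 0 <= o l) (ho_sum : \sum_(l < dO) o l = 1)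
  (ho_dec : forall l l' : 'I_dO, (l <= l')%N -> o l' <= o l)
  (hphi : onfam phi)
  (* the non-increasing rearrangement of (o_l r_m)_{l,m} *)
  (sigma : 'I_(dO * dR) -> 'I_dO * 'I_dR) (hsigma : bijective sigma)
  (hp_dec : forall n n' : 'I_(dO * dR), (n <= n')%N ->
     rear_weight o (gibbs_weight beta lam) sigma n'
       <= rear_weight o (gibbs_weight beta lam) sigma n)
  (* the unitary U_opt(0) *)
  (U0 : 'M[R[i]]_(dO * dR)) (hU0 : U0 \is unitarymx)
  (hi : forall (n : 'I_(dO * dR)) (m : 'I_dR), val n = val m ->
     U0 *m rear_ket phi xi sigma n = tensv (phi (Ordinal hO)) (xi m))
  (hii : forall m : 'I_dR, exists phim : 'I_dO.-1 -> 'cV[R[i]]_dO,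
     [/\ onfam phim,
         (forall l, (phi (Ordinal hO)) ^t* *m phim l = 0) &
         (forall (n : 'I_(dO * dR)) (l : 'I_dO.-1),
            val n = (dR + m * dO.-1 + l)%N ->
            U0 *m rear_ket phi xi sigma n = tensv (phim l) (xi m))]) :
  let HR := specop lam xi in
  let rhoR := specop (gibbs_weight beta lam) xi in
  let rhoO := specop o phi in
  let rho := kron rhoO rhoR in
  let phi1 := phi (Ordinal hO) in
  let pmax := \sum_(n < dO * dR | (n < dR)%N)
                 rear_weight o (gibbs_weight beta lam) sigma n in
  pop dO dR phi1 rho U0 = pmax%:C /\
  (forall V : 'M[R[i]]_(dO * dR), V \is unitarymx ->
     pop dO dR phi1 rho V = pmax%:C ->
     heat dO dR HR rhoR rho U0 <= heat dO dR HR rhoR rho V).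
Proof.
move=> HR rhoR rhoO rho phi1 pmax.
pose p := rear_weight o (gibbs_weight beta lam) sigma; set psi := rear_ket phi xi sigma.
have -> : rho = specop p psi by apply: kron_specop_rear.
have psi_res := rear_ket_resolution hsigma hphi hxi.
have psi_unit n : braket (psi n) (psi n) = 1.
  by rewrite braket_tensv !(onfam_braket hphi, onfam_braket hxi) !eqxx mulr1.
split; first exact: (pop_optimal hphi hxi hi hii).
move=> V V_unitary popV.
rewrite (heat_optimal hphi hxi hi hii) (heat_specop xi psi hphi) lerD2r lecR.
apply: (level_occupation_wsum_le (i0 := Ordinal hO)) => //.
- by move=> *; apply: trans_weight_ge0.
- by apply: (trans_weight_row hphi hxi psi_unit).
- by apply: (trans_weight_col hphi hxi psi_res).
- by apply: (@complexI R); rewrite -(pop_specop phi psi hxi) popV.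
- by move=> n t; apply: block_level_ltE.
Qed.
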